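(* Assume $\gamma_0$ is unimodal (and symmetric about $0$) with $\sup_u|\frac{d}{du}\log\gamma_0(u)|\le\Lambda$ a.e. for some $\Lambda>0$. Then there is a constant $C>0$ depending only on $\gamma_0$ such that for all $x\in\mathbb{R}$, $w\in(0,1]$ and $c\in\mathbb{R}$, $$|\zeta(x;\theta)-x|\le C\bigl(1+\sqrt{|c|+\log(1/w)}\bigr).$$
   Context: Let $\phi$ be the standard normal density and $\gamma_0$ a probability density on $\mathbb{R}$. For $\theta=(w,c)$, $w\in(0,1]$, $c\in\mathbb{R}$, let $g(x;c)=\int\phi(x-\mu)\gamma_0(\mu-c)\,d\mu$, $m(x;\theta)=(1-w)\phi(x)+wg(x;c)$, and $\zeta(x;\theta)=x+\frac{d}{dx}\log m(x;\theta)$ (the posterior mean of $\mu$ given $X=x$ under $X\mid\mu\sim N(\mu,1)$ and prior $(1-w)\delta_0+w\gamma_0(\cdot-c)$). *)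

From Stdlib Require Import Reals Lra.
Open Scope R_scope.

Definition phi (x : R) : R := exp (- (x ^ 2) / 2) / sqrt (2 * PI).

Definition improper_integral (f : R -> R) (I : R) : Prop :=
  (forall a b : R, inhabited (Riemann_integrable f a b)) /\
  forall eps : R, 0 < eps -> exists M : R, forall a b : R,
    a <= - M -> M <= b ->
    forall pr : Riemann_integrable f a b, Rabs (RiemannInt pr - I) < eps.

Definition prob_density (gamma0 : R -> R) : Prop :=
  (forall u, 0 <= gamma0 u) /\ improper_integral gamma0 1.

Definition symmetric_unimodal (gamma0 : R -> R) : Prop :=
  (forall u, gamma0 (- u) = gamma0 u) /\
  (forall u v, 0 <= u -> u <= v -> gamma0 v <= gamma0 u).

(* |d/du log gamma0| <= Lambda (a.e.), read as: gamma0 > 0 and log gamma0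
   is Lambda-Lipschitz *)
Definition log_lipschitz (gamma0 : R -> R) (Lambda : R) : Prop :=
  (forall u, 0 < gamma0 u) /\
  (forall u v, Rabs (ln (gamma0 u) - ln (gamma0 v)) <= Lambda * Rabs (u - v)).

Definition is_g (gamma0 : R -> R) (c : R) (g : R -> R) : Prop :=
  forall y, improper_integral (fun mu => phi (y - mu) * gamma0 (mu - c)) (g y).

Definition marg (w : R) (g : R -> R) (y : R) : R := (1 - w) * phi y + w * g y.

(* Write m = (1 - w) phi + w g.  Translating the convolution shows that g inherits the
   log-Lipschitz bound of gamma0: g y <= exp (Lambda |y - x|) g x.  Hence the envelopes
   (1 - w) phi y + w g(x) exp (+-Lambda (y - x)) touch m at x and dominate it on one side each,
   which bounds m'(x) from both sides without differentiating g:
   |m'(x)| <= |x| (1 - w) phi(x) + Lambda m(x).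
   The same translation bound and g(c) >= phi(1) gamma0(1) give
   g(x) >= phi(1) gamma0(1) exp (- Lambda (|x| + |c|)), so the Gaussian tail |x| phi(x) is
   dominated by w g(x) as soon as |x| exceeds a threshold of order 1 + sqrt (|c| + log (1/w));
   below it, |x| (1 - w) phi(x) / m(x) <= |x| is at most the threshold. *)

From Stdlib Require Import Reals Lra.
From Coquelicot Require Import Coquelicot.
Open Scope R_scope.

Lemma exp_monotone (x y : R) : x <= y -> exp x <= exp y.
Proof. intros [Hlt | ->]; [now apply Rlt_le, exp_increasing | apply Rle_refl]. Qed.

Lemma sqrt_plus_le (u v : R) : 0 <= u -> 0 <= v -> sqrt (u + v) <= sqrt u + sqrt v.
Proof.
  intros Hu Hv.
  pose proof (sqrt_pos u). pose proof (sqrt_pos v).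
  pose proof (sqrt_sqrt u Hu). pose proof (sqrt_sqrt v Hv).
  rewrite <- (sqrt_square (sqrt u + sqrt v)) by lra.
  apply sqrt_le_1_alt. nra.
Qed.

Lemma ln_inv_ge0 (w : R) : 0 < w -> w <= 1 -> 0 <= ln (1 / w).
Proof.
  intros Hw0 Hw1. unfold Rdiv. rewrite Rmult_1_l, ln_Rinv by exact Hw0.
  pose proof (ln_le w 1 Hw0 Hw1). rewrite ln_1 in *. lra.
Qed.

Lemma improper_integral_RInt (f : R -> R) (I eps : R) :
  improper_integral f I -> 0 < eps ->
  exists M, forall a b, a <= - M -> M <= b ->
    ex_RInt f a b /\ Rabs (RInt f a b - I) < eps.
Proof.
  intros [Hint Hlim] Heps. destruct (Hlim eps Heps) as [M HM]. exists M.
  intros a b Ha Hb. destruct (Hint a b) as [pr]. split.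
  - exact (ex_RInt_Reals_1 _ _ _ pr).
  - rewrite (RInt_Reals _ _ _ pr). exact (HM a b Ha Hb pr).
Qed.

Lemma RInt_shift (f : R -> R) (h a b : R) :
  ex_RInt f (a + h) (b + h) ->
  ex_RInt (fun y => f (y + h)) a b /\ RInt (fun y => f (y + h)) a b = RInt f (a + h) (b + h).
Proof.
  intros E.
  assert (E' : ex_RInt f (1 * a + h) (1 * b + h)) by now rewrite !Rmult_1_l.
  assert (Hf : forall y, scal 1 (f (1 * y + h)) = f (y + h))
    by (intros y; change (1 * f (1 * y + h) = f (y + h)); now rewrite !Rmult_1_l).
  split.
  - eapply ex_RInt_ext; [| exact (ex_RInt_comp_lin f 1 h _ _ E')]. intros y _. apply Hf.
  - rewrite <- (Rmult_1_l a), <- (Rmult_1_l b) at 2. rewrite <- (RInt_comp_lin f 1 h _ _ E').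
    apply RInt_ext. intros y _. symmetry. apply Hf.
Qed.

Lemma improper_integral_ge_window (f : R -> R) (I x k : R) :
  improper_integral f I -> (forall u, 0 <= f u) ->
  (forall u, x <= u <= x + 1 -> k <= f u) -> k <= I.
Proof.
  intros HI Hpos Hk. apply Rnot_lt_le. intros HlI.
  destruct (improper_integral_RInt f I (k - I) HI) as [M HM]; [lra |].
  set (b := Rabs M + Rabs x + 1).
  pose proof (Rle_abs M). pose proof (Rle_abs x). pose proof (Rle_abs (- x)).
  rewrite Rabs_Ropp in *. pose proof (Rabs_pos M).
  destruct (HM (- b) b) as [E HE]; [unfold b; lra | unfold b; lra |].
  assert (E1 : ex_RInt f (- b) x) by (apply (ex_RInt_Chasles_1 f _ _ b); [unfold b; lra | exact E]).
  assert (E2 : ex_RInt f x b) by (apply (ex_RInt_Chasles_2 f (- b)); [unfold b; lra | exact E]).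
  assert (E3 : ex_RInt f x (x + 1)) by (apply (ex_RInt_Chasles_1 f _ _ b); [unfold b; lra | exact E2]).
  assert (E4 : ex_RInt f (x + 1) b) by (apply (ex_RInt_Chasles_2 f x); [unfold b; lra | exact E2]).
  assert (Hwin : RInt (fun _ => k) x (x + 1) <= RInt f x (x + 1)).
  { apply RInt_le; [lra | apply ex_RInt_const | exact E3 | intros u Hu; apply Hk; lra]. }
  rewrite RInt_const in Hwin. change (scal (x + 1 - x) k) with ((x + 1 - x) * k) in Hwin.
  assert (0 <= RInt f (- b) x) by (apply RInt_ge_0; [unfold b; lra | exact E1 | intros; apply Hpos]).
  assert (0 <= RInt f (x + 1) b) by (apply RInt_ge_0; [unfold b; lra | exact E4 | intros; apply Hpos]).
  rewrite <- (RInt_Chasles f (- b) x b E1 E2), <- (RInt_Chasles f x (x + 1) b E3 E4) in HE.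
  change plus with Rplus in HE. apply Rabs_def2 in HE. lra.
Qed.

Lemma improper_integral_le_shift (f1 f0 : R -> R) (I1 I0 h K : R) :
  improper_integral f1 I1 -> improper_integral f0 I0 -> 0 <= K ->
  (forall v, f1 (v + h) <= K * f0 v) -> I1 <= K * I0.
Proof.
  intros H1 H0 HK Hpt. apply le_epsilon. intros eps Heps.
  set (e := eps / (K + 1)).
  assert (He : 0 < e) by (unfold e; apply Rdiv_lt_0_compat; lra).
  destruct (improper_integral_RInt f1 I1 e H1 He) as [M1 HM1].
  destruct (improper_integral_RInt f0 I0 e H0 He) as [M0 HM0].
  set (b := Rabs M1 + Rabs M0 + Rabs h).
  pose proof (Rle_abs M1). pose proof (Rle_abs M0). pose proof (Rle_abs h).
  pose proof (Rle_abs (- h)). rewrite Rabs_Ropp in *.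
  pose proof (Rabs_pos M1). pose proof (Rabs_pos M0).
  destruct (HM1 (- b - h + h) (b - h + h)) as [E1 HE1]; [unfold b; lra | unfold b; lra |].
  destruct (HM0 (- b - h) (b - h)) as [E0 HE0]; [unfold b; lra | unfold b; lra |].
  apply Rabs_def2 in HE1. apply Rabs_def2 in HE0.
  destruct (RInt_shift f1 h _ _ E1) as [E1' Hshift].
  assert (Hle : RInt (fun y => f1 (y + h)) (- b - h) (b - h)
                <= RInt (fun y => K * f0 y) (- b - h) (b - h)).
  { apply RInt_le; [unfold b; lra | exact E1' | | intros; apply Hpt].
    exact (ex_RInt_scal (V := R_NormedModule) f0 _ _ K E0). }
  assert (Hscal : RInt (fun y => K * f0 y) (- b - h) (b - h) = K * RInt f0 (- b - h) (b - h))
    by exact (RInt_scal (V := R_CompleteNormedModule) f0 _ _ K E0).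
  rewrite Hscal, Hshift in Hle.
  assert (K * RInt f0 (- b - h) (b - h) <= K * (I0 + e)) by (apply Rmult_le_compat_l; lra).
  assert (Heps' : (K + 1) * e = eps) by (unfold e; field; lra).
  nra.
Qed.

Lemma derivable_pt_lim_ge0_of_right (D : R -> R) (x d : R) :
  derivable_pt_lim D x d -> D x = 0 -> (forall y, x < y -> 0 <= D y) -> 0 <= d.
Proof.
  intros HD H0 Hright. apply Rnot_lt_le. intros Hd.
  destruct (HD (- d) ltac:(lra)) as [del Hdel].
  pose proof (cond_pos del).
  specialize (Hdel (del / 2) ltac:(lra) ltac:(rewrite Rabs_pos_eq; lra)).
  rewrite H0, Rminus_0_r in Hdel. apply Rabs_def2 in Hdel.
  assert (0 <= D (x + del / 2) / (del / 2)) by (apply Rdiv_le_0_compat; [apply Hright |]; lra).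
  lra.
Qed.

Lemma derivable_pt_lim_le0_of_left (D : R -> R) (x d : R) :
  derivable_pt_lim D x d -> D x = 0 -> (forall y, y < x -> 0 <= D y) -> d <= 0.
Proof.
  intros HD H0 Hleft.
  assert (Hrefl : derivable_pt_lim (fun y => D (- y)) (- x) (d * -1)).
  { apply (derivable_pt_lim_comp Ropp D).
    - apply is_derive_Reals. auto_derive; easy.
    - now rewrite Ropp_involutive. }
  enough (0 <= d * -1) by lra.
  apply (derivable_pt_lim_ge0_of_right _ _ _ Hrefl).
  - now rewrite Ropp_involutive.
  - intros y Hy. apply Hleft. lra.
Qed.

Lemma sqrt_2PI_pos : 0 < sqrt (2 * PI).
Proof. apply sqrt_lt_R0. pose proof PI_RGT_0. lra. Qed.

Lemma phi_pos (y : R) : 0 < phi y.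
Proof. apply Rdiv_lt_0_compat; [apply exp_pos | apply sqrt_2PI_pos]. Qed.

Lemma phi_ge_phi1 (y : R) : Rabs y <= 1 -> phi 1 <= phi y.
Proof.
  intros Hy. apply Rmult_le_compat_r; [left; apply Rinv_0_lt_compat, sqrt_2PI_pos |].
  apply exp_monotone. rewrite <- (pow2_abs y). pose proof (Rabs_pos y). nra.
Qed.

Lemma phi_derivable (y : R) : derivable_pt_lim phi y (- y * phi y).
Proof.
  apply is_derive_Reals. unfold phi. auto_derive; [easy |].
  replace (- (y * (y * 1)) * / 2) with (- y ^ 2 / 2) by (unfold Rdiv; ring).
  pose proof sqrt_2PI_pos. field. lra.
Qed.

Lemma gamma0_le_exp_mul (gamma0 : R -> R) (Lambda u v : R) :
  log_lipschitz gamma0 Lambda -> gamma0 u <= exp (Lambda * Rabs (u - v)) * gamma0 v.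
Proof.
  intros [Hpos Hlip].
  rewrite <- (exp_ln (gamma0 u)), <- (exp_ln (gamma0 v)), <- exp_plus by apply Hpos.
  apply exp_monotone. pose proof (Hlip u v). pose proof (Rle_abs (ln (gamma0 u) - ln (gamma0 v))).
  lra.
Qed.

Lemma log_lipschitz_nonneg (gamma0 : R -> R) (Lambda : R) :
  log_lipschitz gamma0 Lambda -> 0 <= Lambda.
Proof.
  intros [_ Hlip]. pose proof (Hlip 1 0). pose proof (Rabs_pos (ln (gamma0 1) - ln (gamma0 0))).
  rewrite Rminus_0_r, Rabs_R1 in *. lra.
Qed.

Definition kappa (gamma0 : R -> R) : R := phi 1 * gamma0 1.

Lemma quadratic_ge_linear (a s t : R) :
  0 <= a -> 0 <= s -> 4 * a + 2 * sqrt s <= t -> a * t + s <= t * t / 2.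
Proof.
  intros Ha Hs Ht. pose proof (sqrt_pos s). pose proof (sqrt_sqrt s Hs).
  assert (4 * s <= t * t) by nra. nra.
Qed.

Lemma abs_mul_gauss_le (x a s : R) :
  0 <= a -> 0 <= s -> 4 * (a + 1) + 2 * sqrt s <= Rabs x ->
  Rabs x * exp (- x ^ 2 / 2) <= exp (- (a * Rabs x + s)).
Proof.
  intros Ha Hs Hx.
  pose proof (quadratic_ge_linear (a + 1) s (Rabs x) ltac:(lra) Hs Hx) as Hq.
  assert (Habs : Rabs x <= exp (Rabs x)) by (pose proof (exp_ineq1_le (Rabs x)); lra).
  eapply Rle_trans; [apply Rmult_le_compat_r; [left; apply exp_pos | exact Habs] |].
  rewrite <- exp_plus. apply exp_monotone. rewrite <- (pow2_abs x). lra.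
Qed.

(* Dominates [- ln (kappa gamma0 * sqrt (2 * PI))] while staying nonnegative. *)
Definition tail_const (gamma0 : R -> R) : R := Rabs (ln (kappa gamma0 * sqrt (2 * PI))).

Definition tail_threshold (gamma0 : R -> R) (Lambda c w : R) : R :=
  4 * (Lambda + 1) + 2 * sqrt ((Lambda + 1) * (Rabs c + ln (1 / w)) + tail_const gamma0).

Section Convolution.

Variables (gamma0 : R -> R) (Lambda c : R) (g : R -> R).
Hypothesis gamma0_unimodal : symmetric_unimodal gamma0.
Hypothesis gamma0_log_lipschitz : log_lipschitz gamma0 Lambda.
Hypothesis g_def : is_g gamma0 c g.

Lemma g_shift_le (x h : R) : g (x + h) <= exp (Lambda * Rabs h) * g x.
Proof.
  apply (improper_integral_le_shift (fun mu => phi (x + h - mu) * gamma0 (mu - c))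
           (fun mu => phi (x - mu) * gamma0 (mu - c)) _ _ h); [apply g_def | apply g_def | |].
  - left; apply exp_pos.
  - intros v. replace (x + h - (v + h)) with (x - v) by ring.
    pose proof (gamma0_le_exp_mul gamma0 Lambda (v + h - c) (v - c) gamma0_log_lipschitz) as Hr.
    replace (v + h - c - (v - c)) with h in Hr by ring.
    pose proof (phi_pos (x - v)). nra.
Qed.

Lemma kappa_le_g_center : kappa gamma0 <= g c.
Proof.
  destruct gamma0_log_lipschitz as [Hpos _].
  apply (improper_integral_ge_window (fun mu => phi (c - mu) * gamma0 (mu - c)) _ c);
    [apply g_def | |].
  - intros u. pose proof (phi_pos (c - u)). pose proof (Hpos (u - c)). nra.
  - intros u Hu. unfold kappa. apply Rmult_le_compat.
    + left; apply phi_pos.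
    + left; apply Hpos.
    + apply phi_ge_phi1. apply Rabs_le. lra.
    + apply (proj2 gamma0_unimodal); lra.
Qed.

Lemma kappa_pos : 0 < kappa gamma0.
Proof. apply Rmult_lt_0_compat; [apply phi_pos | apply gamma0_log_lipschitz]. Qed.

Lemma g_ge (x : R) : kappa gamma0 * exp (- (Lambda * (Rabs x + Rabs c))) <= g x.
Proof.
  set (B := Lambda * Rabs (c - x)).
  assert (Hc : g c * exp (- B) <= g x).
  { pose proof (g_shift_le x (c - x)) as Hc. replace (x + (c - x)) with c in Hc by ring.
    replace (g x) with (exp B * g x * exp (- B))
      by (rewrite exp_Ropp; field; apply Rgt_not_eq, exp_pos).
    apply Rmult_le_compat_r; [left; apply exp_pos | exact Hc]. }
  eapply Rle_trans; [| exact Hc].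
  pose proof kappa_pos. pose proof (log_lipschitz_nonneg gamma0 Lambda gamma0_log_lipschitz).
  apply Rmult_le_compat; [lra | left; apply exp_pos | apply kappa_le_g_center |].
  apply exp_monotone, Ropp_le_contravar, Rmult_le_compat_l; [lra |].
  unfold Rminus. rewrite Rplus_comm. eapply Rle_trans; [apply Rabs_triang |].
  rewrite Rabs_Ropp. lra.
Qed.

Lemma g_pos (x : R) : 0 < g x.
Proof.
  eapply Rlt_le_trans; [| apply g_ge].
  apply Rmult_lt_0_compat; [apply kappa_pos | apply exp_pos].
Qed.

Variable w : R.
Hypothesis w_pos : 0 < w.
Hypothesis w_le1 : w <= 1.

Lemma marg_ge_w_g (y : R) : w * g y <= marg w g y.
Proof. unfold marg. pose proof (phi_pos y). assert (0 <= (1 - w) * phi y) by nra. lra. Qed.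

Lemma marg_pos (y : R) : 0 < marg w g y.
Proof.
  eapply Rlt_le_trans; [| apply marg_ge_w_g].
  apply Rmult_lt_0_compat; [exact w_pos | exact (g_pos y)].
Qed.

Lemma marg_derivable (x l : R) :
  derivable_pt_lim (fun y => ln (marg w g y)) x l -> derivable_pt_lim (marg w g) x (marg w g x * l).
Proof.
  intros Hl.
  pose proof (derivable_pt_lim_comp _ exp x l _ Hl (derivable_pt_lim_exp (ln (marg w g x)))) as Hexp.
  rewrite exp_ln in Hexp by apply marg_pos.
  eapply derivable_pt_lim_ext; [| exact Hexp]. intros y. apply exp_ln, marg_pos.
Qed.

(* Touches [marg w g] at [x]; for [s = Lambda] (resp. [- Lambda]) it dominates [marg w g]
   to the right (resp. left) of [x]. *)
Definition envelope (s x y : R) : R := (1 - w) * phi y + w * g x * exp (s * (y - x)).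

Lemma envelope_derivable (s x : R) :
  derivable_pt_lim (envelope s x) x ((1 - w) * (- x * phi x) + w * g x * s).
Proof.
  apply derivable_pt_lim_plus.
  - apply derivable_pt_lim_scal, phi_derivable.
  - apply derivable_pt_lim_scal, is_derive_Reals. auto_derive; [easy |].
    rewrite Rplus_opp_r, Rmult_0_r, exp_0. ring.
Qed.

Lemma marg_le_envelope (s x y : R) :
  Lambda * Rabs (y - x) <= s * (y - x) -> marg w g y <= envelope s x y.
Proof.
  intros Hs. unfold marg, envelope. rewrite Rmult_assoc.
  apply Rplus_le_compat_l, Rmult_le_compat_l; [lra |].
  pose proof (g_shift_le x (y - x)) as Hshift.
  replace (x + (y - x)) with y in Hshift by ring.
  eapply Rle_trans; [exact Hshift |]. rewrite (Rmult_comm (g x)).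
  apply Rmult_le_compat_r; [left; apply g_pos | now apply exp_monotone].
Qed.

Lemma ln_marg_derivative_bound (x l : R) :
  derivable_pt_lim (fun y => ln (marg w g y)) x l ->
  Rabs l * marg w g x <= Rabs x * ((1 - w) * phi x) + Lambda * marg w g x.
Proof.
  intros Hl. pose proof (marg_derivable x l Hl) as Hm.
  assert (Htouch : forall s, envelope s x x - marg w g x = 0)
    by (intros s; unfold envelope, marg; rewrite Rminus_diag, Rmult_0_r, exp_0; ring).
  assert (Hupper : marg w g x * l <= (1 - w) * (- x * phi x) + w * g x * Lambda).
  { enough (0 <= (1 - w) * (- x * phi x) + w * g x * Lambda - marg w g x * l) by lra.
    apply (derivable_pt_lim_ge0_of_right (fun y => envelope Lambda x y - marg w g y) x);
      [exact (derivable_pt_lim_minus _ _ x _ _ (envelope_derivable Lambda x) Hm) | apply Htouch |].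
    intros y Hy. enough (marg w g y <= envelope Lambda x y) by lra.
    apply marg_le_envelope. rewrite Rabs_pos_eq by lra. lra. }
  assert (Hlower : (1 - w) * (- x * phi x) + w * g x * - Lambda <= marg w g x * l).
  { enough ((1 - w) * (- x * phi x) + w * g x * - Lambda - marg w g x * l <= 0) by lra.
    apply (derivable_pt_lim_le0_of_left (fun y => envelope (- Lambda) x y - marg w g y) x);
      [exact (derivable_pt_lim_minus _ _ x _ _ (envelope_derivable (- Lambda) x) Hm) | apply Htouch |].
    intros y Hy. enough (marg w g y <= envelope (- Lambda) x y) by lra.
    apply marg_le_envelope. rewrite Rabs_left by lra. lra. }
  pose proof (marg_pos x). pose proof (marg_ge_w_g x). pose proof (phi_pos x).
  pose proof (log_lipschitz_nonneg gamma0 Lambda gamma0_log_lipschitz).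
  assert (Hwx : w * g x * Lambda <= Lambda * marg w g x) by nra.
  set (P := (1 - w) * phi x).
  assert (0 <= P) by (unfold P; nra).
  assert (Hsplit : (1 - w) * (- x * phi x) = - x * P) by (unfold P; ring).
  assert (x * P <= Rabs x * P) by (apply Rmult_le_compat_r; [lra | apply Rle_abs]).
  assert (- x * P <= Rabs x * P) by (apply Rmult_le_compat_r; [lra | rewrite <- Rabs_Ropp; apply Rle_abs]).
  assert (Hml : Rabs (marg w g x * l) <= Rabs x * P + Lambda * marg w g x)
    by (apply Rabs_le; split; nra).
  rewrite Rabs_mult, (Rabs_pos_eq (marg w g x)) in Hml by lra. lra.
Qed.

Lemma abs_mul_phi_le_w_g (x : R) :
  tail_threshold gamma0 Lambda c w <= Rabs x -> Rabs x * phi x <= w * g x.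
Proof.
  intros Hx. unfold tail_threshold in Hx.
  pose proof (log_lipschitz_nonneg gamma0 Lambda gamma0_log_lipschitz) as HL.
  pose proof (ln_inv_ge0 w w_pos w_le1). pose proof (Rabs_pos c). pose proof sqrt_2PI_pos.
  set (k := kappa gamma0 * sqrt (2 * PI)).
  assert (Hk : 0 < k)
    by (apply Rmult_lt_0_compat; [apply kappa_pos | assumption]).
  assert (Hk' : - ln k <= tail_const gamma0)
    by (unfold tail_const; fold k; rewrite <- Rabs_Ropp; apply Rle_abs).
  set (s := (Lambda + 1) * (Rabs c + ln (1 / w)) + tail_const gamma0) in Hx.
  assert (Hs : 0 <= s) by (unfold s; pose proof (Rabs_pos (ln k)); unfold tail_const; fold k; nra).
  assert (Hexp : exp (- (Lambda * Rabs x + s)) <= w * k * exp (- (Lambda * (Rabs x + Rabs c)))).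
  { rewrite <- (exp_ln w), <- (exp_ln k), <- !exp_plus by assumption. apply exp_monotone.
    assert (ln (1 / w) = - ln w) by (unfold Rdiv; rewrite Rmult_1_l; apply ln_Rinv, w_pos).
    unfold s. nra. }
  apply (Rmult_le_reg_r (sqrt (2 * PI))); [assumption |].
  replace (Rabs x * phi x * sqrt (2 * PI)) with (Rabs x * exp (- x ^ 2 / 2))
    by (unfold phi; field; lra).
  eapply Rle_trans; [apply (abs_mul_gauss_le x Lambda s HL Hs Hx) |].
  eapply Rle_trans; [exact Hexp |]. unfold k.
  replace (w * g x * sqrt (2 * PI)) with (w * sqrt (2 * PI) * g x) by ring.
  replace (w * (kappa gamma0 * sqrt (2 * PI)) * exp (- (Lambda * (Rabs x + Rabs c))))
    with (w * sqrt (2 * PI) * (kappa gamma0 * exp (- (Lambda * (Rabs x + Rabs c))))) by ring.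
  apply Rmult_le_compat_l; [nra |].
  exact (g_ge x).
Qed.

Lemma abs_mul_phi_le_marg (x : R) :
  Rabs x * ((1 - w) * phi x) <= tail_threshold gamma0 Lambda c w * marg w g x.
Proof.
  pose proof (phi_pos x). pose proof (marg_pos x). pose proof (marg_ge_w_g x). pose proof (Rabs_pos x).
  assert (0 <= (1 - w) * phi x) by nra.
  destruct (Rle_lt_dec (Rabs x) (tail_threshold gamma0 Lambda c w)) as [Hle | Hgt].
  - assert ((1 - w) * phi x <= marg w g x).
    { pose proof (g_pos x).
      unfold marg. nra. }
    nra.
  - pose proof (abs_mul_phi_le_w_g x (Rlt_le _ _ Hgt)).
    assert (Rabs x * ((1 - w) * phi x) <= Rabs x * phi x)
      by (apply Rmult_le_compat_l; [lra | nra]).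
    assert (1 <= tail_threshold gamma0 Lambda c w).
    { unfold tail_threshold. pose proof (log_lipschitz_nonneg gamma0 Lambda gamma0_log_lipschitz).
      pose proof (sqrt_pos ((Lambda + 1) * (Rabs c + ln (1 / w)) + tail_const gamma0)). lra. }
    nra.
Qed.

Lemma tail_threshold_le :
  tail_threshold gamma0 Lambda c w
  <= 4 * (Lambda + 1) + 2 * sqrt (tail_const gamma0)
     + 2 * sqrt (Lambda + 1) * sqrt (Rabs c + ln (1 / w)).
Proof.
  pose proof (log_lipschitz_nonneg gamma0 Lambda gamma0_log_lipschitz).
  pose proof (ln_inv_ge0 w w_pos w_le1). pose proof (Rabs_pos c).
  assert (0 <= tail_const gamma0) by apply Rabs_pos.
  unfold tail_threshold.
  rewrite Rplus_assoc, Rmult_assoc, <- sqrt_mult_alt by lra.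
  pose proof (sqrt_plus_le ((Lambda + 1) * (Rabs c + ln (1 / w))) (tail_const gamma0)
                ltac:(nra) ltac:(lra)).
  lra.
Qed.

End Convolution.

Theorem mainTheorem9 (gamma0 : R -> R) (Lambda : R) :
  prob_density gamma0 ->
  symmetric_unimodal gamma0 ->
  0 < Lambda ->
  log_lipschitz gamma0 Lambda ->
  exists C : R, 0 < C /\
    forall (x w c : R) (g : R -> R) (l : R),
      0 < w -> w <= 1 ->
      is_g gamma0 c g ->
      derivable_pt_lim (fun y => ln (marg w g y)) x l ->
      Rabs l <= C * (1 + sqrt (Rabs c + ln (1 / w))).
Proof.
  intros _ Hunimodal HLpos HL.
  set (C := Lambda + 4 * (Lambda + 1) + 2 * sqrt (tail_const gamma0) + 2 * sqrt (Lambda + 1)).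
  pose proof (sqrt_pos (tail_const gamma0)). pose proof (sqrt_pos (Lambda + 1)).
  exists C. split; [unfold C; lra |].
  intros x w c g l Hw0 Hw1 Hg Hl.
  pose proof (ln_marg_derivative_bound gamma0 Lambda c g Hunimodal HL Hg w Hw0 Hw1 x l Hl) as Hderiv.
  pose proof (abs_mul_phi_le_marg gamma0 Lambda c g Hunimodal HL Hg w Hw0 Hw1 x) as Htail.
  pose proof (tail_threshold_le gamma0 Lambda c HL w Hw0 Hw1) as Hthreshold.
  pose proof (marg_pos gamma0 Lambda c g Hunimodal HL Hg w Hw0 Hw1 x) as Hm.
  assert (Habs : Rabs l <= tail_threshold gamma0 Lambda c w + Lambda)
    by (apply (Rmult_le_reg_r (marg w g x)); lra).
  pose proof (sqrt_pos (Rabs c + ln (1 / w))).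
  unfold C. nra.
Qed.
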